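(* Let $p$ be an odd prime, $k\ge1$, $s\ge2$, $0\le l<p^k$ with $l=\alpha p+\beta$ ($0\le\alpha<p^{k-1}$, $0\le\beta\le p-1$), and let $0\le t'\le p-1$, $0\le\beta'\le p-1$. Define $$m_{2s-1}=p^k(p-1)-\big((p-1)(\alpha+p^{k-1}t')+\beta\big),\quad m_{2s}=p^kt',\quad m_{2s+1}=p^k(p-1)-\big((p-1)l+\beta'\big),$$ and $n_j=p^k(p-1)-m_j$ for $j\in\{2s-1,2s,2s+1\}$. Say ''there is a descent at $2s-1$'' if $m_{2s-1}>m_{2s}$ and $n_{2s-1}<n_{2s}$, and ''there is a descent at $2s$'' if $m_{2s}>m_{2s+1}$ and $n_{2s}<n_{2s+1}$. Then, with $j^k_t=t\sum_{\iota=0}^{k-1}p^\iota$: (1) if $l<\frac{p^k-1}{2}$, there is a descent at $2s-1$ if and only if $0\le t'\le\frac{p-1}{2}$ (for every $\beta'$); (2) if $l\ge\frac{p^k-1}{2}$, there is a descent at $2s-1$ if and only if $0\le t'<\frac{p-1}{2}$ (for every $\beta'$); (3) if $1\le t\le p-1$ and $j^k_{t-1}<l<j^k_t$, there is a descent at $2s$ if and only if $p-t\le t'\le p-1$ (for every $\beta'$); (4) if $0\le t\le p-1$ and $l=j^k_t$, then there is a descent at $2s$ if and only if $p-t\le t'\le p-1$ when $\beta'\le t$, and if and only if $p-t-1\le t'\le p-1$ when $\beta'>t$.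
   Context: Interpretation (not needed for the arithmetic claim): in the $p$-Bratteli diagram whose vertices are hook partitions, $m_{2s-1},m_{2s},m_{2s+1}$ are the numbers of horizontal nodes of the last three blocks (each of total size $p^k(p-1)$, $n_j$ being the number of vertical nodes) added along a path which passes, in column $k$, through a vertex indexed $l+p^kt'$ on floor $2(k+s)-1$, then the vertex indexed $l$ on floor $2(k+s)$, and ends at the vertex indexed $pl+\beta'$ on floor $2(k+s)+1$; a descent at position $j$ means block $j$ exceeds block $j+1$ in the sense $m_j>m_{j+1}$, $n_j<n_{j+1}$. *)

From mathcomp Require Import all_boot all_order all_algebra.
Set Implicit Arguments. Unset Strict Implicit. Unset Printing Implicit Defensive.
Import Order.TTheory GRing.Theory Num.Theory.

(* Block size p^k (p-1); m_j = horizontal nodes, n_j = p^k(p-1) - m_j.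
   Values are taken in int so that no truncated subtraction is involved. *)
Definition blk (p k : nat) : int := ((p ^ k * (p - 1))%N)%:Z.

Definition m_odd (p k alpha beta t' : nat) : int :=
  (blk p k - (((p - 1) * (alpha + p ^ (k - 1) * t') + beta)%N)%:Z)%R.
Definition m_even (p k t' : nat) : int := ((p ^ k * t')%N)%:Z.
Definition m_next (p k l beta' : nat) : int :=
  (blk p k - (((p - 1) * l + beta')%N)%:Z)%R.

Definition n_of (p k : nat) (m : int) : int := (blk p k - m)%R.

Definition descent (p k : nat) (m m' : int) : Prop :=
  (m' < m)%R /\ (n_of p k m < n_of p k m')%R.

Definition jkt (p k t : nat) : nat := t * \sum_(i < k) p ^ i.

From mathcomp Require Import all_boot all_order all_algebra.
From mathcomp Require Import zify.

(** With p = 2h+1 and p^k = pq, the descent at 2s-1 reads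
    q(4h+1) t' + x < q(4h+1) h + qh with x = (p-1) alpha + beta < q(4h+1):
    a lexicographic comparison of (t', x) with (h, qh), so it holds iff
    t' < h, or t' = h and x < qh; for odd q the latter is exactly
    l < (p^k-1)/2.  With u = p-1-t' and Q = p^k-1, the descent at 2s reads
    (Q+1) u < (p-1) l + beta', and (p-1) j^k_t = t Q writes the right-hand
    side as t Q + e with e <= Q, again a lexicographic comparison. *)

Lemma descentE p k m m' : descent p k m m' <-> (m' < m)%R.
Proof. by rewrite /descent /n_of; split=> [[]|lt_m'm] //; split; lia. Qed.

Lemma ltn_lex_mul D x c t h : x < D -> c <= D ->
  (D * t + x < D * h + c) = (t < h) || ((t == h) && (x < c)).
Proof.
move=> xD cD; case: (ltngtP t h) => [th|ht|->] /=.
- have : D * t.+1 <= D * h by rewrite leq_mul2l th orbT.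
  rewrite mulnS; lia.
- apply/negbTE; rewrite -leqNgt.
  have : D * h.+1 <= D * t by rewrite leq_mul2l ht orbT.
  rewrite mulnS; lia.
- by rewrite ltn_add2l.
Qed.

Lemma ltn_mulS_lex Q u t e : t <= Q -> e <= Q ->
  (Q.+1 * u < Q * t + e) = (u < t) || ((u == t) && (t < e)).
Proof.
move=> tQ eQ; case: (ltngtP u t) => [ut|tu|->] /=.
- have : Q.+1 * u.+1 <= Q.+1 * t by rewrite leq_mul2l ut.
  rewrite mulnS mulSn; lia.
- apply/negbTE; rewrite -leqNgt.
  have : Q.+1 * t.+1 <= Q.+1 * u by rewrite leq_mul2l tu.
  rewrite mulnS mulSn; lia.
- by rewrite mulSn; lia.
Qed.

Lemma odd_block_lex h q alpha beta t : alpha < q -> beta <= 2 * h ->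
  ((2 * h).+1 * q * t + (2 * h * (alpha + q * t) + beta)
     < (2 * h).+1 * q * (2 * h)) =
  (t < h) || ((t == h) && (2 * h * alpha + beta < q * h)).
Proof.
move=> alpha_lt beta_le; rewrite -(@ltn_lex_mul (q * (4 * h).+1)); last first.
- by rewrite leq_mul2l; lia.
- have : 2 * h * alpha.+1 <= 2 * h * q by rewrite leq_mul2l alpha_lt orbT.
  lia.
congr (_ < _); lia.
Qed.

Lemma half_block_threshold h r alpha beta : 0 < h -> beta <= 2 * h ->
  ((2 * h).+1 * alpha + beta < ((2 * h).+1 * (2 * r).+1 - 1) %/ 2) =
  (2 * h * alpha + beta < (2 * r).+1 * h).
Proof.
move=> h_gt0 beta_le.
have -> : ((2 * h).+1 * (2 * r).+1 - 1) %/ 2 = (2 * r).+1 * h + r.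
  by rewrite (_ : _ - 1 = 2 * ((2 * r).+1 * h + r)) ?mulKn //; lia.
case: (ltngtP alpha r) => [alpha_lt|r_lt|->]; last by lia.
- have : 2 * h * alpha.+1 <= 2 * h * r by rewrite leq_mul2l alpha_lt orbT.
  lia.
- have : 2 * h * r.+1 <= 2 * h * alpha by rewrite leq_mul2l r_lt orbT.
  lia.
Qed.

Section Blocks.

Variables p k : nat.
Hypothesis k_gt0 : 0 < k.

Local Notation q := (p ^ (k - 1)).

Lemma expn_block : p ^ k = p * q.
Proof. by rewrite -expnS subn1 prednK. Qed.

Lemma mul_pred_jkt t : (p - 1) * jkt p k t = (p ^ k - 1) * t.
Proof. by rewrite /jkt mulnCA !subn1 -predn_exp mulnC. Qed.

Section DescentAtEven.

Hypothesis p_gt0 : 0 < p.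

Lemma leq_pred_block : p - 1 <= p ^ k - 1.
Proof. by rewrite leq_sub2r // expn_block leq_pmulr // expn_gt0 p_gt0. Qed.

Lemma descent_even_lex l beta' t' t e :
  t' <= p - 1 -> t <= p ^ k - 1 -> e <= p ^ k - 1 ->
  (p - 1) * l + beta' = (p ^ k - 1) * t + e ->
  descent p k (m_even p k t') (m_next p k l beta') <->
  (p - 1 - t' < t) || ((p - 1 - t' == t) && (t < e)).
Proof.
move=> t'_le t_le e_le l_eq; rewrite descentE /m_even /m_next /blk.
have pk_predK : (p ^ k - 1).+1 = p ^ k by rewrite subn1 prednK // expn_gt0 p_gt0.
have split_blk : p ^ k * (p - 1) = p ^ k * t' + p ^ k * (p - 1 - t').
  by rewrite -mulnDr subnKC.
rewrite -(@ltn_mulS_lex (p ^ k - 1)) // -l_eq pk_predK split_blk.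
move: (p ^ k * t') (p ^ k * (p - 1 - t')) => a b; lia.
Qed.

Lemma descent_at_jkt t beta' t' : t <= p - 1 -> beta' <= p - 1 -> t' <= p - 1 ->
  descent p k (m_even p k t') (m_next p k (jkt p k t) beta') <->
  (p - 1 - t' < t) || ((p - 1 - t' == t) && (t < beta')).
Proof.
move=> t_le beta'_le t'_le; have pk_le := leq_pred_block.
by apply: descent_even_lex; rewrite ?mul_pred_jkt //; lia.
Qed.

Lemma descent_between_jkt t l beta' t' : t < p - 1 ->
  jkt p k t < l < jkt p k t.+1 -> beta' <= p - 1 -> t' <= p - 1 ->
  descent p k (m_even p k t') (m_next p k l beta') <-> p - 1 - t' <= t.
Proof.
move=> t_lt /andP[lo hi] beta'_le t'_le; have pk_le := leq_pred_block.
have lo' : (p - 1) * (jkt p k t).+1 <= (p - 1) * l by rewrite leq_mul2l lo orbT.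
have hi' : (p - 1) * l.+1 <= (p - 1) * jkt p k t.+1 by rewrite leq_mul2l hi orbT.
rewrite !mulnS !mul_pred_jkt in lo' hi'.
rewrite (@descent_even_lex _ _ _ t ((p - 1) * l + beta' - (p ^ k - 1) * t)); lia.
Qed.

End DescentAtEven.

Section DescentAtOdd.

Hypothesis p_odd : odd p.

Local Notation h := ((p - 1) %/ 2).

Lemma odd_halfE : p = (2 * h).+1.
Proof. by move: (odd_double_half p); rewrite p_odd; lia. Qed.

Lemma descent_odd_lex alpha beta t' : alpha < q -> beta <= p - 1 ->
  descent p k (m_odd p k alpha beta t') (m_even p k t') <->
  (t' < h) || ((t' == h) && ((p - 1) * alpha + beta < q * h)).
Proof.
move=> alpha_lt beta_le; rewrite descentE /m_odd /m_even /blk expn_block.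
move: (odd_halfE) alpha_lt beta_le; set q' := p ^ _; set h' := _ %/ 2.
clearbody q' h' => -> alpha_lt beta_le.
rewrite subSS subn0 in beta_le *; rewrite -odd_block_lex //; lia.
Qed.

Lemma half_block_thresholdE l alpha beta :
  1 < p -> l = alpha * p + beta -> beta <= p - 1 ->
  (l < (p ^ k - 1) %/ 2) = ((p - 1) * alpha + beta < q * h).
Proof.
move=> p_gt1 -> beta_le; rewrite expn_block.
have q_halfE : q = (2 * q./2).+1.
  by move: (odd_double_half q); rewrite oddX p_odd orbT; lia.
have h_gt0 : 0 < h by move: odd_halfE; lia.
move: (odd_halfE) q_halfE h_gt0 beta_le; set q' := p ^ _; set h' := _ %/ 2.
clearbody q' h' => -> -> h_gt0 beta_le.
rewrite subSS subn0 in beta_le *; rewrite mulnC half_block_threshold //; lia.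
Qed.

End DescentAtOdd.

End Blocks.

Theorem mainTheorem3 (p k s l alpha beta t' beta' : nat) :
  prime p -> odd p -> 1 <= k -> 2 <= s ->
  l < p ^ k -> l = alpha * p + beta -> alpha < p ^ (k - 1) -> beta <= p - 1 ->
  t' <= p - 1 -> beta' <= p - 1 ->
  (* (1) *)
  (l < (p ^ k - 1) %/ 2 ->
     (descent p k (m_odd p k alpha beta t') (m_even p k t') <-> t' <= (p - 1) %/ 2))
  /\
  (* (2) *)
  ((p ^ k - 1) %/ 2 <= l ->
     (descent p k (m_odd p k alpha beta t') (m_even p k t') <-> t' < (p - 1) %/ 2))
  /\
  (* (3) *)
  (forall t : nat, 1 <= t <= p - 1 -> jkt p k (t - 1) < l < jkt p k t ->
     (descent p k (m_even p k t') (m_next p k l beta') <-> p - t <= t' <= p - 1))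
  /\
  (* (4) *)
  (forall t : nat, t <= p - 1 -> l = jkt p k t ->
     (beta' <= t ->
        (descent p k (m_even p k t') (m_next p k l beta') <-> p - t <= t' <= p - 1))
     /\
     (t < beta' ->
        (descent p k (m_even p k t') (m_next p k l beta') <-> p - t - 1 <= t' <= p - 1))).
Proof.
move=> p_prime p_odd k_gt0 _ _ lE alpha_lt beta_le t'_le beta'_le.
have p_gt0 := prime_gt0 p_prime.
have p_gt1 := prime_gt1 p_prime.
have threshold := @half_block_thresholdE p k k_gt0 p_odd _ _ _ p_gt1 lE beta_le.
split; [|split; [|split]].
- move=> l_small; rewrite threshold in l_small.
  by rewrite descent_odd_lex // l_small andbT orbC -leq_eqVlt.
- move=> l_large; rewrite leqNgt threshold in l_large.
  by rewrite descent_odd_lex // (negbTE l_large) andbF orbF.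
- move=> t /andP[t_gt0 t_le].
  rewrite -[in jkt p k t](subnK t_gt0) addn1 => l_between.
  by rewrite (@descent_between_jkt p k k_gt0 p_gt0 (t - 1)) //; lia.
- move=> t t_le ->; rewrite descent_at_jkt //.
  by split=> beta'_cmp; lia.
Qed.
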